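(* A differentiated history $h$ has a projection $h'=h|_D$ (for some set $D$ of data values) such that $h'$ contains a $DeqEmpty$ operation and $h'\not\sqsubseteq M(R_{DeqEmpty})$ if and only if $h$ has a $DeqEmpty$ operation $o$ and data values $d_1,\dots,d_m\in\mathrm{dom}(h)$ such that: $Enq(d_1)<_{hb} o$; $Enq(d_i)<_{hb}Deq(d_{i-1})$ for every $1<i\le m$; and either $o<_{hb}Deq(d_m)$ or $h$ contains no operation $Deq(d_m)$.
   Context: Data values are natural numbers. Operations are pairs of a method in $\{Enq, Deq, DeqEmpty\}$ and a data value (for $DeqEmpty$ a ghost identifier). A history $h$ is a finite set of operations with a strict partial order $<_{hb}$ (happens-before) that is an interval order. $\mathrm{dom}(h)$ is the set of data values of $h$. $h$ is differentiated if each data value is carried by at most one $Enq$ or $DeqEmpty$ operation and the value of a $DeqEmpty$ operation is carried by no other operation. For a set $D$ of data values, $h|_D$ is the restriction of $h$ to operations with value in $D$. A sequential execution is a finite sequence of method events; $h\sqsubseteq u$ means there is a bijection between operations of $h$ and positions of $u$ preserving method and value with $o_1<_{hb}o_2$ implying the image of $o_1$ precedes that of $o_2$; $h\sqsubseteq S$ means $h\sqsubseteq u$ for some $u\in S$. $M(R_{DeqEmpty})$ is the set of sequential executions $u\cdot DeqEmpty(x)\cdot v$ where every $Enq(d)$ in $u$ has a $Deq(d)$ in $u$, and $x$ does not occur in $u,v$. *)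

From Stdlib Require List.
From mathcomp Require Import all_boot.
Set Implicit Arguments. Unset Strict Implicit. Unset Printing Implicit Defensive.

Inductive method := Enq | Deq | DeqEmpty.

Definition event := (method * nat)%type.

(* A history: a finite set of operations (identified by the elements of a
   finite type, so several operations may carry the same method/value, e.g.
   several Deq(d)), labelled with a method and a data value (for DeqEmpty the
   value is its ghost identifier), together with the happens-before relation. *)
Record history := History {
  hop : finType;
  hmeth : hop -> method;
  hval : hop -> nat;
  hb : hop -> hop -> Prop
}.

Definition is_history (h : history) : Prop :=
  (forall o : hop h, ~ hb o o) /\
  (forall o1 o2 o3 : hop h, hb o1 o2 -> hb o2 o3 -> hb o1 o3) /\
  (forall a b c d : hop h, hb a b -> hb c d -> hb a d \/ hb c b).

Definition in_dom (h : history) (d : nat) : Prop := exists o : hop h, hval o = d.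

Definition differentiated (h : history) : Prop :=
  (forall o1 o2 : hop h,
      (hmeth o1 = Enq \/ hmeth o1 = DeqEmpty) ->
      (hmeth o2 = Enq \/ hmeth o2 = DeqEmpty) ->
      hval o1 = hval o2 -> o1 = o2) /\
  (forall o1 o2 : hop h, hmeth o1 = DeqEmpty -> hval o2 = hval o1 -> o2 = o1).

(* h|_D : restriction to the operations whose value is in D.  (Only D ∩ dom(h)
   matters, which is finite, so a boolean predicate D loses no generality.) *)
Definition restrict (h : history) (D : pred nat) : history :=
  @History {o : hop h | D (hval o)}
    (fun o => hmeth (sval o)) (fun o => hval (sval o))
    (fun o1 o2 => hb (sval o1) (sval o2)).

Definition ev0 : event := (Enq, 0).

Definition lin (h : history) (u : seq event) : Prop :=
  exists f : hop h -> 'I_(size u),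
    bijective f /\
    (forall o : hop h, nth ev0 u (f o) = (hmeth o, hval o)) /\
    (forall o1 o2 : hop h, hb o1 o2 -> (f o1 < f o2)%N).

Definition in_M_DeqEmpty (w : seq event) : Prop :=
  exists (u v : seq event) (x : nat),
    w = u ++ (DeqEmpty, x) :: v /\
    (forall d, List.In (Enq, d) u -> List.In (Deq, d) u) /\
    (forall m, ~ List.In (m, x) u /\ ~ List.In (m, x) v).

Definition lin_M_DeqEmpty (h : history) : Prop :=
  exists w, in_M_DeqEmpty w /\ lin h w.

Definition has_DeqEmpty (h : history) : Prop :=
  exists o : hop h, hmeth o = DeqEmpty.

From mathcomp Require Import all_boot.
From mathcomp Require Import zify.
From Stdlib Require Import Classical ClassicalEpsilon.
Set Implicit Arguments. Unset Strict Implicit. Unset Printing Implicit Defensive.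

(* Call d reachable from the DeqEmpty o if there is a chain Enq(d_1) <hb o,
   Enq(d_i) <hb Deq(d_{i-1}), ending with d = d_m, and blocked if o <hb
   Deq(d) or there is no Deq(d).  The projection on {o} and the reachable
   values has o as its only DeqEmpty, and in a linearization u.o.v of it
   induction along the chain puts every Enq(d_i), hence every Deq(d_i), inside
   u: impossible for a blocked d.
   Conversely, if no reachable value is blocked, linearize first the
   operations below o or below the first Deq(d) of a reachable d (first: its
   predecessors precede every Deq(d); it exists because <hb is an interval
   order), then o, then the rest.  The first block is downward closed, avoids
   o, and with each Enq(d) it contains that first Deq(d), as d is reachable. *)

Definition classicb (P : Prop) : bool :=
  if excluded_middle_informative P then true else false.

Lemma classicbP (P : Prop) : reflect P (classicb P).
Proof. by rewrite /classicb; case: excluded_middle_informative; constructor. Qed.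

Section FiniteOrders.

Variables (T : finType) (r : T -> T -> Prop).

Definition below (x : T) : {set T} := [set y | classicb (r y x)].

Lemma in_below x y : (y \in below x) = classicb (r y x).
Proof. by rewrite inE. Qed.

Hypothesis r_interval : forall a b c d, r a b -> r c d -> r a d \/ r c b.

(* In an interval order the down-sets are nested, so an element with a
   smallest down-set is below everything the others are below. *)
Lemma interval_order_least_below (P : T -> Prop) : (exists p, P p) ->
  exists2 p0, P p0 & forall x p, r x p0 -> P p -> r x p.
Proof.
case=> p1 /classicbP Pp1.
case: (@arg_minnP _ p1 (fun p => classicb (P p)) (fun p => #|below p|) Pp1).
move=> p0 /classicbP Pp0 p0_min.
exists p0 => // x p xp0 Pp; apply: NNPP => not_xp.
have: below p \proper below p0.
  apply/properP; split; last by exists x; rewrite in_below; apply/classicbP.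
  apply/subsetP => y; rewrite !in_below => /classicbP yp; apply/classicbP.
  by case: (r_interval yp xp0) => // /not_xp.
by move/proper_card; rewrite ltnNge p0_min //; apply/classicbP.
Qed.

Hypotheses (r_irr : forall x, ~ r x x)
           (r_trans : forall x y z, r x y -> r y z -> r x z).

Lemma below_proper x y : r x y -> below x \proper below y.
Proof.
move=> rxy; apply/properP; split.
  apply/subsetP => z; rewrite !in_below => /classicbP rzx.
  by apply/classicbP; apply: r_trans rxy.
by exists x; rewrite !in_below; apply/classicbP => // /r_irr.
Qed.

Lemma index_sort_key (w : T -> nat) (s := sort (relpre w leq) (enum T)) x y :
  w x < w y -> index x s < index y s.
Proof.
have s_sorted : sorted (relpre w leq) s by apply: sort_sorted => a b; apply: leq_total.
have mem_s z : z \in s by rewrite mem_sort mem_enum.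
have w_trans : transitive (relpre w leq) by move=> a b c /= /leq_trans; apply.
move=> wxy; rewrite ltnNge; apply/negP.
move/(sorted_leq_index w_trans (fun a => leqnn (w a)) s_sorted y x (mem_s y) (mem_s x)).
by rewrite /= leqNgt wxy.
Qed.

Lemma linear_extension (k : T -> nat) : (forall x y, r x y -> k x <= k y) ->
  exists s : seq T, [/\ uniq s, forall x, x \in s,
    forall x y, r x y -> index x s < index y s &
    forall x y, k x < k y -> index x s < index y s].
Proof.
move=> k_mono; pose w x := k x * #|T|.+1 + #|below x|.
have below_max x : #|below x| <= #|T| by apply: max_card.
exists (sort (relpre w leq) (enum T)); split.
- by rewrite sort_uniq enum_uniq.
- by move=> x; rewrite mem_sort mem_enum.
- move=> x y rxy; apply: index_sort_key.
  have := proper_card (below_proper rxy); have := k_mono _ _ rxy.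
  have := below_max x; have := below_max y; rewrite /w; nia.
- move=> x y kxy; apply: index_sort_key.
  have := below_max x; have := below_max y; rewrite /w; nia.
Qed.

End FiniteOrders.

Lemma In_map (T : eqType) (A : Type) (f : T -> A) (s : seq T) (y : A) :
  List.In y (map f s) <-> exists2 x, x \in s & f x = y.
Proof.
elim: s => [|a s IH] /=; first by split=> // -[].
split=> [[<-|/IH [x xs <-]]|[x]]; first by exists a; rewrite ?mem_head.
  by exists x; rewrite // inE xs orbT.
by rewrite inE => /predU1P[-> <-|xs fx]; [left | right; apply/IH; exists x].
Qed.

Definition label (g : history) (x : hop g) : event := (hmeth x, hval x).

Lemma lin_enum (g : history) (s : seq (hop g)) : uniq s -> (forall x, x \in s) ->
  (forall x y, hb x y -> index x s < index y s) -> lin g (map (@label g) s).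
Proof.
move=> s_uniq s_total s_hb.
have index_lt x : index x s < size (map (@label g) s) by rewrite size_map index_mem.
exists (fun x => Ordinal (index_lt x)); split; last split.
- apply: inj_card_bij => [x y /(congr1 val) /= |].
    exact: index_inj (s_total x) (s_total y).
  by rewrite card_ord size_map -(card_uniqP s_uniq) (eq_card s_total).
- by move=> x /=; rewrite (nth_map x) ?index_mem // nth_index.
- exact: s_hb.
Qed.

Section Reachability.

Variables (g : history) (o : hop g).

Inductive reachable : nat -> Prop :=
| reachable_enq (e : hop g) : hmeth e = Enq -> hb e o -> reachable (hval e)
| reachable_step (d : nat) (e : hop g) : reachable d -> hmeth e = Enq ->
    (forall p : hop g, hmeth p = Deq -> hval p = d -> hb e p) -> reachable (hval e).

Definition blocked (d : nat) : Prop :=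
  (forall p : hop g, hmeth p = Deq -> hval p = d -> hb o p) \/
  ~ (exists p : hop g, hmeth p = Deq /\ hval p = d).

Definition enq_chain (m : nat) (d : nat -> nat) : Prop :=
  [/\ 1 <= m, forall i, 1 <= i <= m -> in_dom g (d i),
      exists e : hop g, hmeth e = Enq /\ hval e = d 1 /\ hb e o &
      forall i, 1 < i <= m ->
        exists e : hop g, hmeth e = Enq /\ hval e = d i /\
          forall p : hop g, hmeth p = Deq -> hval p = d i.-1 -> hb e p].

Lemma reachable_enq_value d :
  reachable d -> exists e : hop g, hmeth e = Enq /\ hval e = d.
Proof. by case=> [e|d' e] *; exists e. Qed.

Lemma enq_chain_reachable m d : enq_chain m d -> forall i, 1 <= i <= m -> reachable (d i).
Proof.
case=> _ _ [e1 [e1_enq [e1_val e1o]]] chain_step.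
elim=> [//|[|i] IH] im; first by rewrite -e1_val; apply: reachable_enq.
have [e [e_enq [<- e_deq]]] := chain_step i.+2 im.
apply: reachable_step e_enq e_deq; apply: IH; lia.
Qed.

Lemma reachable_enq_chain d : reachable d -> exists m dd, enq_chain m dd /\ dd m = d.
Proof.
elim=> [e e_enq eo | d' e _ [m [dd [[m_pos dd_dom dd_first dd_step] <-]]] e_enq e_deq].
  exists 1, (fun _ => hval e); split=> //; split=> //.
  - by move=> i _; exists e.
  - by exists e.
  - by move=> i; lia.
pose dd' i := if i == m.+1 then hval e else dd i.
exists m.+1, dd'; split; last by rewrite /dd' eqxx.
split=> // [i im||i im]; rewrite /dd'.
- by case: eqP => [_|ne]; [exists e | apply: dd_dom; lia].
- by have -> : (1 == m.+1) = false by apply/eqP; lia.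
- have -> : (i.-1 == m.+1) = false by apply/eqP; lia.
  case: eqP => [->|ne]; first by exists e.
  by apply: dd_step; lia.
Qed.

End Reachability.

Definition violation (h : history) : Prop :=
  exists (o : hop h) (m : nat) (d : nat -> nat),
    hmeth o = DeqEmpty /\ (1 <= m)%N /\
    (forall i, (1 <= i <= m)%N -> in_dom h (d i)) /\
    (exists e : hop h, hmeth e = Enq /\ hval e = d 1 /\ hb e o) /\
    (forall i, (1 < i <= m)%N ->
       exists e : hop h, hmeth e = Enq /\ hval e = d i /\
         forall p : hop h, hmeth p = Deq -> hval p = d i.-1 -> hb e p) /\
    ((forall p : hop h, hmeth p = Deq -> hval p = d m -> hb o p) \/
     ~ (exists p : hop h, hmeth p = Deq /\ hval p = d m)).

Lemma violationP (g : history) :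
  violation g <->
  exists (o : hop g) d, [/\ hmeth o = DeqEmpty, reachable o d & blocked o d].
Proof.
split=> [[o [m [dd [o_empty [m_pos [dd_dom [dd_first [dd_step dd_last]]]]]]]]|].
  have chain : enq_chain o m dd by split.
  by exists o, (dd m); split=> //; apply: (enq_chain_reachable chain); lia.
case=> o [d [o_empty /reachable_enq_chain [m [dd [[? ? ? ?] <-]]] last]].
by exists o, m, dd.
Qed.

Section Unblocked.

Variables (g : history) (o : hop g).
Hypotheses (g_hist : is_history g) (g_diff : differentiated g)
           (o_empty : hmeth o = DeqEmpty)
           (unblocked : forall d, reachable o d -> ~ blocked o d).

Definition first_deq (d : nat) (p0 : hop g) : Prop :=
  [/\ hmeth p0 = Deq, hval p0 = d &
      forall x p : hop g, hb x p0 -> hmeth p = Deq -> hval p = d -> hb x p].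

Lemma reachable_first_deq d : reachable o d -> exists p0, first_deq d p0.
Proof.
move=> reach_d; have [_ [_ interval]] := g_hist.
have [|p0 [p0_deq p0_val] p0_first] := @interval_order_least_below _ _ interval
  (fun p => hmeth p = Deq /\ hval p = d).
  by apply: NNPP => no_deq; apply: (unblocked reach_d); right.
by exists p0; split=> // x p xp0 p_deq p_val; apply: p0_first.
Qed.

Lemma first_deq_not_after d p0 : reachable o d -> first_deq d p0 -> ~ hb o p0.
Proof.
move=> reach_d [_ _ p0_first] op0; apply: (unblocked reach_d); left.
by move=> p; apply: p0_first.
Qed.

(* The operations placed before the DeqEmpty [o] in the linearization. *)
Definition early (x : hop g) : Prop :=
  hb x o \/ exists d p0, [/\ reachable o d, first_deq d p0 & x = p0 \/ hb x p0].

Lemma early_down x y : hb y x -> early x -> early y.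
Proof.
have [_ [trans _]] := g_hist.
move=> yx [xo|[d [p0 [reach_d p0_first xp0]]]]; first by left; apply: trans xo.
right; exists d, p0; split=> //; right.
by case: xp0 => [<-//|]; apply: trans.
Qed.

Lemma not_early_o : ~ early o.
Proof.
have [irr _] := g_hist.
case=> [/irr//|[d [p0 [reach_d p0_first [op0|op0]]]]].
  by case: p0_first; rewrite -op0 o_empty.
exact: first_deq_not_after reach_d p0_first op0.
Qed.

Lemma early_enq_deq x : early x -> hmeth x = Enq ->
  exists p, [/\ hmeth p = Deq, hval p = hval x & early p].
Proof.
move=> x_early x_enq.
have reach_x : reachable o (hval x).
  case: x_early => [xo|[d [p0 [reach_d [p0_deq _ p0_first] [xp0|xp0]]]]].
  - exact: reachable_enq.
  - by move: p0_deq; rewrite -xp0 x_enq.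
  - by apply: reachable_step reach_d x_enq _ => p; apply: p0_first.
have [p0 p0_first] := reachable_first_deq reach_x.
have [p0_deq p0_val _] := p0_first.
by exists p0; split=> //; right; exists (hval x), p0; split=> //; left.
Qed.

Definition phase (x : hop g) : nat :=
  if classicb (early x) then 0 else if x == o then 1 else 2.

Lemma phase_early x : early x -> phase x = 0.
Proof. by rewrite /phase; case: classicbP. Qed.

Lemma phase_le2 x : phase x <= 2.
Proof. by rewrite /phase; case: classicbP => //; case: (x == o). Qed.

Lemma phase_mono x y : hb x y -> phase x <= phase y.
Proof.
move=> xy; rewrite {2}/phase; case: classicbP => [y_early|_].
  by rewrite (phase_early (early_down xy y_early)).
case: eqP => [yo|_]; last exact: phase_le2.
by rewrite phase_early //; left; rewrite -yo.
Qed.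

Lemma phase0 x : (phase x == 0) = classicb (early x).
Proof. by rewrite /phase; case: classicbP => //; case: (x == o). Qed.

Lemma phase_o : phase o = 1.
Proof. by rewrite /phase eqxx; case: classicbP => // /not_early_o. Qed.

Lemma phase_gt_o x : phase x != 0 -> x != o -> phase o < phase x.
Proof. by rewrite phase_o /phase => + /negbTE ->; case: ifP. Qed.

Theorem lin_M_DeqEmpty_unblocked : lin_M_DeqEmpty g.
Proof.
have [irr [trans _]] := g_hist.
have [s [s_uniq s_total s_hb s_phase]] := linear_extension irr trans phase_mono.
set i := index o s.
have before_o x : (x \in take i s) = (phase x == 0).
  rewrite in_take //; apply/idP/idP => [x_before|/eqP x0].
    apply: contraTT x_before; rewrite -ltnNge => x_pos.
    case: (eqVneq x o) => [->|x_o]; first by rewrite ltnSn.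
    by apply/ltnW/s_phase/phase_gt_o.
  by apply: s_phase; rewrite x0 phase_o.
have s_split : s = take i s ++ o :: drop i.+1 s by rewrite -drop_index ?cat_take_drop.
have value_o x : hval x = hval o -> x = o by apply: g_diff.2.
exists (map (@label g) s); split; last exact: lin_enum.
exists (map (@label g) (take i s)), (map (@label g) (drop i.+1 s)), (hval o).
split; [|split].
- by rewrite {1}s_split map_cat /= [label o]/label o_empty.
- move=> d /In_map [x]; rewrite before_o phase0 => /classicbP x_early [x_enq <-].
  have [p [p_deq p_val p_early]] := early_enq_deq x_early x_enq.
  apply/In_map; exists p; last by rewrite /label p_deq p_val.
  by rewrite before_o phase0; apply/classicbP.
- have o_notin : o \notin take i s ++ drop i.+1 s.
    by move: s_uniq; rewrite {1}s_split -cat1s uniq_catCA => /andP[].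
  move=> mt; split=> /In_map [x x_in [_ /value_o x_o]];
    by move: o_notin; rewrite mem_cat -x_o x_in ?orbT.
Qed.

End Unblocked.

Lemma In_nth (A : Type) (x0 : A) (s : seq A) (y : A) :
  List.In y s <-> exists2 i, i < size s & nth x0 s i = y.
Proof.
rewrite -{1}(mkseq_nth x0 s) /mkseq In_map.
split=> -[i]; last by exists i; rewrite ?mem_iota.
by rewrite mem_iota => i_s <-; exists i.
Qed.

Section Slot.

Variables (g : history) (u v : seq event) (x : nat).
Let w := u ++ (DeqEmpty, x) :: v.
Variable f : hop g -> 'I_(size w).
Hypotheses (f_bij : bijective f) (f_label : forall o, nth ev0 w (f o) = label o).

Lemma size_u_lt : size u < size w.
Proof. by rewrite size_cat /= addnS ltnS leq_addr. Qed.

Lemma slot_DeqEmpty : exists q, f q = size u :> nat /\ hmeth q = DeqEmpty.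
Proof.
case: f_bij => f' f'K fK; exists (f' (Ordinal size_u_lt)); rewrite fK; split=> //.
by have := f_label (f' (Ordinal size_u_lt)); rewrite fK /= nth_cat ltnn subnn => -[].
Qed.

Hypothesis u_closed : forall d, List.In (Enq, d) u -> List.In (Deq, d) u.

Lemma slot_enq_deq e : hmeth e = Enq -> f e < size u ->
  exists p, [/\ hmeth p = Deq, hval p = hval e & f p < size u].
Proof.
move=> e_enq fe_u; case: f_bij => f' f'K fK.
have : List.In (Enq, hval e) u.
  by apply/(In_nth ev0); exists (f e) => //; rewrite -e_enq -[(_, _)]f_label nth_cat fe_u.
move/u_closed/(In_nth ev0) => [j j_u u_j].
have j_w : j < size w by rewrite (ltn_trans j_u) ?size_u_lt.
exists (f' (Ordinal j_w)); rewrite fK.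
by have := f_label (f' (Ordinal j_w)); rewrite fK /= nth_cat j_u u_j => -[<- <-].
Qed.

End Slot.

Section Restriction.

Variables (h : history) (D : pred nat).

Lemma restrict_history : is_history h -> is_history (restrict h D).
Proof.
case=> irr [trans interval]; split; [|split] => /=.
- by move=> x; apply: irr.
- by move=> x y z; apply: trans.
- by move=> a b c d; apply: interval.
Qed.

Lemma restrict_differentiated : differentiated h -> differentiated (restrict h D).
Proof.
case=> enq_inj empty_inj; split=> /= x y.
- by move=> x_meth y_meth xy_val; apply/val_inj/enq_inj.
- by move=> x_empty yx_val; apply/val_inj/empty_inj.
Qed.

Variable o : hop (restrict h D).

Lemma restrict_reachable d : reachable o d -> D d /\ reachable (sval o) d.
Proof.
elim=> [e e_enq eo | d' e _ [Dd' reach_d'] e_enq e_deq]; split; try exact: (svalP e).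
  exact: reachable_enq.
apply: reachable_step reach_d' e_enq _ => p p_deq p_val.
by apply: (e_deq (exist _ p _)) => //; rewrite p_val.
Qed.

Lemma restrict_blocked d : D d -> blocked o d -> blocked (sval o) d.
Proof.
move=> Dd [o_deq|no_deq]; [left | right].
  by move=> p p_deq p_val; apply: (o_deq (exist _ p _)) => //; rewrite p_val.
case=> p [p_deq p_val]; apply: no_deq.
have Dp : D (hval p) by rewrite p_val.
by exists (exist _ p Dp).
Qed.

End Restriction.

Section Blocked.

Variables (h : history) (o : hop h).
Hypotheses (h_diff : differentiated h) (o_empty : hmeth o = DeqEmpty).

Definition reach_dom : pred nat := fun d => classicb (d = hval o \/ reachable o d).

Lemma reach_dom_o : reach_dom (hval o).
Proof. by apply/classicbP; left. Qed.

Lemma reach_dom_reachable d : reachable o d -> reach_dom d.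
Proof. by move=> reach_d; apply/classicbP; right. Qed.

Notation h_o := (restrict h reach_dom).

Lemma restrict_DeqEmpty (q : hop h_o) : hmeth q = DeqEmpty -> sval q = o.
Proof.
case: q => q /= /classicbP [q_val|/reachable_enq_value [e [e_enq e_val]]] q_empty.
  by apply: h_diff.2.
by move: e_enq; rewrite (h_diff.2 q e q_empty e_val) q_empty.
Qed.

Theorem not_lin_M_blocked d : reachable o d -> blocked o d -> ~ lin_M_DeqEmpty h_o.
Proof.
move=> reach_d blocked_d [w [[u [v [x [-> [u_closed _]]]]] [f [f_bij [f_label f_hb]]]]].
have [q [fq q_empty]] := slot_DeqEmpty f_bij f_label.
pose o' : hop h_o := exist _ o reach_dom_o.
have fo' : f o' = size u :> nat.
  by rewrite -fq; congr (val (f _)); apply/val_inj; rewrite /= restrict_DeqEmpty.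
have enq_early e (reach_e : reachable o (hval e)) : hmeth e = Enq ->
    f (exist _ e (reach_dom_reachable reach_e) : hop h_o) < size u ->
    exists p : hop h_o, [/\ hmeth p = Deq, hval p = hval e & f p < size u].
  move=> e_enq; pose e' : hop h_o := exist _ e (reach_dom_reachable reach_e).
  by move=> /(slot_enq_deq f_bij f_label u_closed (e := e') e_enq) [p]; exists p.
have deq_early d' : reachable o d' ->
    exists p : hop h_o, [/\ hmeth p = Deq, hval p = d' & f p < size u].
  elim=> [e e_enq eo | d'' e reach_d'' [p [p_deq p_val p_u]] e_enq e_deq].
    by apply: (enq_early _ (reachable_enq e_enq eo) e_enq); rewrite -fo'; apply: f_hb.
  apply: (enq_early _ (reachable_step reach_d'' e_enq e_deq) e_enq).
  by apply: ltn_trans p_u; apply: f_hb; exact: (e_deq _ p_deq p_val).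
have [p [p_deq p_val p_u]] := deq_early d reach_d.
case: blocked_d => [o_deq|no_deq]; last by apply: no_deq; exists (sval p).
by have := f_hb o' p (o_deq _ p_deq p_val); rewrite fo' ltnNge ltnW.
Qed.

End Blocked.

Theorem mainTheorem6 (h : history) :
  is_history h -> differentiated h ->
  ((exists D : pred nat,
       has_DeqEmpty (restrict h D) /\ ~ lin_M_DeqEmpty (restrict h D)) <->
   (exists (o : hop h) (m : nat) (d : nat -> nat),
       hmeth o = DeqEmpty /\ (1 <= m)%N /\
       (forall i, (1 <= i <= m)%N -> in_dom h (d i)) /\
       (* Enq(d_1) <_hb o *)
       (exists e : hop h, hmeth e = Enq /\ hval e = d 1 /\ hb e o) /\
       (* Enq(d_i) <_hb Deq(d_{i-1}) for 1 < i <= m *)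
       (forall i, (1 < i <= m)%N ->
          exists e : hop h, hmeth e = Enq /\ hval e = d i /\
            forall p : hop h, hmeth p = Deq -> hval p = d i.-1 -> hb e p) /\
       (* o <_hb Deq(d_m), or h has no Deq(d_m) *)
       ((forall p : hop h, hmeth p = Deq -> hval p = d m -> hb o p) \/
        ~ (exists p : hop h, hmeth p = Deq /\ hval p = d m)))).
Proof.
move=> h_hist h_diff; rewrite -/(violation h) violationP; split.
- case=> D [[o o_empty] not_lin]; apply: NNPP => no_violation; apply: not_lin.
  apply: (lin_M_DeqEmpty_unblocked (restrict_history D h_hist)
            (restrict_differentiated D h_diff) o_empty).
  move=> d /restrict_reachable [Dd reach_d] /(restrict_blocked Dd) blocked_d.
  by apply: no_violation; exists (sval o), d.
- case=> o [d [o_empty reach_d blocked_d]]; exists (reach_dom o); split.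
    by exists (exist _ o (reach_dom_o o)).
  exact: not_lin_M_blocked reach_d blocked_d.
Qed.
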